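(* Let $a$ be a smooth, positive, increasing function on $(0,\infty)$ and consider the two-dimensional Robertson–Walker spacetime $ds^2=-dt^2+a^2(t)\,d\chi^2$, $t>0$, $\chi\in\mathbb{R}$, with comoving worldlines $\beta_0:\chi=0$, $\beta_1:\chi=\chi_1$, $\beta_2:\chi=\chi_2$. Consider any one of the following three configurations (all named events assumed to exist). Scenario I: Fix $\tau_0>0$. The spacelike geodesic orthogonal to $\beta_0$ at $(\tau_0,0)$ meets $\beta_1$ at $q=(\tau_1,\chi_1)$ and $\beta_2$ at $s=(t^-,\chi_2)$; the spacelike geodesic orthogonal to $\beta_1$ at $(\tau_1,\chi_1)$ meets $\beta_2$ at $s'=(t^+,\chi_2)$. Velocities: $v_{\mathrm{Fermi}1}$ of $\beta_1$ relative to $\beta_0$ at proper time $\tau_0$ (computed at $q$), $v_{\mathrm{Fermi}3}$ of $\beta_2$ relative to $\beta_0$ at proper time $\tau_0$ (computed at $s$), $v_{\mathrm{Fermi}2}$ of $\beta_2$ relative to $\beta_1$ at proper time $\tau_1$ (computed at $s'$). Scenario II: The spacelike geodesic orthogonal to $\beta_0$ at $(t^-,0)$ meets $\beta_1$ at $q=(\tau_1,\chi_1)$; the spacelike geodesic orthogonal to $\beta_1$ at $q$ meets $\beta_2$ at $s=(\tau_2,\chi_2)$; and $s$ lies on the spacelike geodesic orthogonal to $\beta_0$ at $(t^+,0)$. Velocities: $v_{\mathrm{Fermi}1}$ of $\beta_1$ relative to $\beta_0$ at proper time $t^-$ (at $q$), $v_{\mathrm{Fermi}2}$ of $\beta_2$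 relative to $\beta_1$ at proper time $\tau_1$ (at $s$), $v_{\mathrm{Fermi}3}$ of $\beta_2$ relative to $\beta_0$ at proper time $t^+$ (at $s$). Scenario III: Fix $\tau_0>0$. The spacelike geodesic orthogonal to $\beta_0$ at $(\tau_0,0)$ meets $\beta_1$ at $q=(t^+,\chi_1)$ and $\beta_2$ at $s=(\tau_2,\chi_2)$; $s$ lies on the spacelike geodesic orthogonal to $\beta_1$ at $(t^-,\chi_1)$. Velocities: $v_{\mathrm{Fermi}1}$ of $\beta_1$ relative to $\beta_0$ at proper time $\tau_0$ (at $q$), $v_{\mathrm{Fermi}2}$ of $\beta_2$ relative to $\beta_1$ at proper time $t^-$ (at $s$), $v_{\mathrm{Fermi}3}$ of $\beta_2$ relative to $\beta_0$ at proper time $\tau_0$ (at $s$). Then in each scenario $$1+\frac{v_{\mathrm{Fermi}3}^{2}}{g_{\tau_0\tau_0}(s)}=\frac{a^{2}(t^{-})}{a^{2}(t^{+})}\left(1+\frac{v_{\mathrm{Fermi}1}^{2}}{g_{\tau_0\tau_0}(q)}\right)\left(1+\frac{v_{\mathrm{Fermi}2}^{2}}{g_{\tau_1\tau_1}(\hat s)}\right),$$ where $\hat s=s'$ in Scenario I and $\hat s=s$ in Scenarios II and III, and each metric coefficient is evaluated at the indicated event expressed in the Fermi coordinates of the corresponding observer ($g_{\tau_0\tau_0}$ for $\beta_0$, $g_{\tau_1\tau_1}$ for $\beta_1$).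
   Context: For a comoving observer $\beta_j$ ($\chi=\chi_j$), Fermi coordinates $(\tau_j,\rho)$ are defined near $\beta_j$: $\tau_j$ labels the spacelike geodesic orthogonal to $\beta_j$ at $(\tau_j,\chi_j)$ (the Fermi slice of events simultaneous with $\beta_j(\tau_j)$), and $\rho$ is the signed proper distance along it from $\beta_j$. In these coordinates the metric has the form $ds^2=g_{\tau_j\tau_j}(\tau_j,\rho)\,d\tau_j^2+d\rho^2$ with $g_{\tau_j\tau_j}<0$. The Fermi velocity of a radially moving particle relative to $\beta_j$ at proper time $\tau_j$ is $v_{\mathrm{Fermi}}=d\rho/d\tau_j$ along the particle's path. The kinematic velocity of a comoving particle at coordinate $\chi$ relative to $\beta_j$ at proper time $\tau$ (obtained by parallel transporting the particle's 4-velocity along the orthogonal spacelike geodesic to $(\tau,\chi_j)$ and writing it as $\gamma(u+V)$ with $u=\partial_t$, $V\perp u$, $V=v_{\mathrm{kin}}a(\tau)^{-1}\partial_\chi$) equals $\mathrm{sgn}(\chi-\chi_j)\sqrt{1-a^2(t)/a^2(\tau)}$, where $(t,\chi)$ is the event where the geodesic meets the particle. It is known that at an event with Fermi coordinates $(\tau,\rho)$, $v_{\mathrm{Fermi}}=\sqrt{-g_{\tau\tau}(\tau,\rho)}\,v_{\mathrm{kin}}$. *)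

From Stdlib Require Import Reals.
From Coquelicot Require Import Coquelicot.
Open Scope R_scope.

(** Two-dimensional Robertson–Walker spacetime  ds^2 = -dt^2 + a(t)^2 dchi^2,
    events are pairs (t, chi) with t > 0.  Comoving observer beta_j : chi = chi_j. *)

Definition smooth_pos (a : R -> R) : Prop :=
  forall (n : nat) (t : R), 0 < t -> ex_derive_n a n t.
Definition positive_pos (a : R -> R) : Prop := forall t, 0 < t -> 0 < a t.
Definition increasing_pos (a : R -> R) : Prop :=
  forall s t, 0 < s -> s < t -> a s < a t.

Definition pd1 (f : R -> R -> R) : R -> R -> R :=
  fun x y => Derive (fun z => f z y) x.
Definition pd2 (f : R -> R -> R) : R -> R -> R :=
  fun x y => Derive (fun z => f x z) y.

Definition C2_at (f : R -> R -> R) (x y : R) : Prop :=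
  locally_2d (fun u v =>
     ex_derive (fun z => f z v) u /\ ex_derive (fun z => f u z) v /\
     ex_derive (fun z => pd1 f z v) u /\ ex_derive (fun z => pd1 f u z) v /\
     ex_derive (fun z => pd2 f z v) u /\ ex_derive (fun z => pd2 f u z) v) x y /\
  continuity_2d_pt f x y /\
  continuity_2d_pt (pd1 f) x y /\ continuity_2d_pt (pd2 f) x y /\
  continuity_2d_pt (pd1 (pd1 f)) x y /\ continuity_2d_pt (pd2 (pd1 f)) x y /\
  continuity_2d_pt (pd1 (pd2 f)) x y /\ continuity_2d_pt (pd2 (pd2 f)) x y.

(** Metric coefficient g_{tau tau} in Fermi coordinates (tau, rho), where the
    event with Fermi coordinates (tau, rho) has RW coordinates (T tau rho, X tau rho):
    g_{tau tau} = g(d_tau, d_tau) = -(d_tau T)^2 + a(T)^2 (d_tau X)^2. *)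
Definition gFermi (a : R -> R) (T X : R -> R -> R) (tau rho : R) : R :=
  - (pd1 T tau rho) ^ 2 + (a (T tau rho)) ^ 2 * (pd1 X tau rho) ^ 2.

(** The event with Fermi
    coordinates (tau, rho) is (t, chi) = (T tau rho, X tau rho):
    for each tau, rho |-> (T tau rho, X tau rho) is the spacelike geodesic
    orthogonal to the observer at (tau, chij), parametrized by signed proper
    distance rho (rho increasing in the +chi direction); the chart is C^2 and
    g_{tau tau} < 0 on the domain. *)
Definition FermiChart (a : R -> R) (chij : R) (D : R -> R -> Prop)
    (T X : R -> R -> R) : Prop :=
  (forall tau rho, D tau rho -> locally_2d D tau rho) /\
  (forall tau rho, D tau rho ->
     forall r, Rmin 0 rho <= r <= Rmax 0 rho -> D tau r) /\
  (forall tau rho, D tau rho -> 0 < T tau rho) /\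
  (* rho = 0 is the observer's worldline at proper time tau; the geodesic
     starts there with unit tangent orthogonal to d_t, i.e. (0, 1/a(tau)) *)
  (forall tau, D tau 0 ->
     T tau 0 = tau /\ X tau 0 = chij /\
     pd2 T tau 0 = 0 /\ pd2 X tau 0 = 1 / a tau) /\
  (* geodesic equations of -dt^2 + a(t)^2 dchi^2 along each slice *)
  (forall tau rho, D tau rho ->
     pd2 (pd2 T) tau rho
       + a (T tau rho) * Derive a (T tau rho) * (pd2 X tau rho) ^ 2 = 0 /\
     pd2 (pd2 X) tau rho
       + 2 * (Derive a (T tau rho) / a (T tau rho)) * pd2 T tau rho * pd2 X tau rho
       = 0) /\
  (forall tau rho, D tau rho -> C2_at T tau rho /\ C2_at X tau rho) /\
  (* metric form ds^2 = g_{tau tau} dtau^2 + drho^2 with g_{tau tau} < 0 *)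
  (forall tau rho, D tau rho -> gFermi a T X tau rho < 0).

(** Fermi velocity v = d rho / d tau, at proper time tau, of the comoving
    particle chi = chik relative to the observer whose Fermi chart is (D,T,X);
    rho0 is the Fermi coordinate of the particle at proper time tau.
    The particle's path in Fermi coordinates is tau' |-> (tau', r tau'). *)
Definition FermiVel (D : R -> R -> Prop) (X : R -> R -> R) (chik tau rho0 v : R)
    : Prop :=
  exists r : R -> R,
    r tau = rho0 /\
    locally tau (fun s => D s (r s) /\ X s (r s) = chik) /\
    is_derive r tau v.

(* Each slice rho |-> (T tau rho, X tau rho) of a Fermi chart is a unit-speed geodesic of
   -dt^2 + a(t)^2 dchi^2 leaving the observer orthogonally, so along it the speed
   -T_rho^2 + a(T)^2 X_rho^2 = 1 and the momentum a(T)^2 X_rho = a(tau) are conserved, and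
   the chart is orthogonal: g(d_tau, d_rho) = 0.  A comoving particle satisfies
   X_tau + X_rho v = 0, and these four relations force
   1 + v^2 / g_tautau = a(t)^2 / a(tau)^2, with t the time of the particle's event.
   In each scenario the identity is the product of three such redshift factors. *)

From Stdlib Require Import Reals Lra.
From Coquelicot Require Import Coquelicot.
Open Scope R_scope.

Lemma eq_of_is_derive_0 (F : R -> R) (x y : R) :
  (forall c, Rmin x y <= c <= Rmax x y -> is_derive F c 0) -> F y = F x.
Proof.
  intros HF.
  destruct (MVT_abs F (fun _ => 0) x y) as [c [Hc _]].
  { intros c Hc. apply is_derive_Reals, HF, Hc. }
  rewrite Rabs_R0, Rmult_0_l in Hc.
  destruct (Req_dec (F y - F x) 0) as [E|E]; [lra|].
  now destruct (Rabs_no_R0 _ E).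
Qed.

Lemma C2_at_partials (f : R -> R -> R) (x y : R) : C2_at f x y ->
  ex_derive (fun z => f z y) x /\ ex_derive (fun z => f x z) y /\
  ex_derive (fun z => pd1 f z y) x /\ ex_derive (fun z => pd1 f x z) y /\
  ex_derive (fun z => pd2 f z y) x /\ ex_derive (fun z => pd2 f x z) y.
Proof. intros [HL _]. exact (locally_2d_singleton _ _ _ HL). Qed.

Lemma C2_at_ex_diff_n (f : R -> R -> R) (x y : R) : C2_at f x y -> ex_diff_n f 2 x y.
Proof.
  intros Hf. pose proof (C2_at_partials f x y Hf) as [d1 [d2 [d11 [d12 [d21 d22]]]]].
  destruct Hf as [_ [c0 [c1 [c2 [c11 [c21 [c12 c22]]]]]]].
  simpl. repeat split; assumption.
Qed.

Lemma C2_at_pd_comm (f : R -> R -> R) (x y : R) :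
  C2_at f x y -> pd2 (pd1 f) x y = pd1 (pd2 f) x y.
Proof.
  intros [HL [_ [_ [_ [_ [c21 [c12 _]]]]]]].
  symmetry. apply Schwarz; [|exact c12|exact c21].
  eapply locally_2d_impl; [|exact HL]. apply locally_2d_forall.
  intros u v [h1 [h2 [h3 [h4 [h5 h6]]]]]. repeat split; assumption.
Qed.

Lemma DL_pol_1 (f : R -> R -> R) (x y dx dy : R) :
  DL_pol 1 f x y dx dy = f x y + (pd1 f x y * dx + pd2 f x y * dy).
Proof.
  unfold DL_pol, differential, partial_derive, pd1, pd2, Binomial.C. simpl.
  field.
Qed.

Lemma differentiable_of_DL_regular_1 (f : R -> R -> R) (x y : R) :
  DL_regular_n f 1 x y -> differentiable_pt_lim f x y (pd1 f x y) (pd2 f x y).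
Proof.
  intros [K HK] eps.
  assert (He : 0 < eps / (Rabs K + 1)).
  { apply Rdiv_lt_0_compat; [apply cond_pos|]. pose proof (Rabs_pos K); lra. }
  assert (Hsmall : locally_2d (fun u v =>
    Rabs (u - x) < eps / (Rabs K + 1) /\ Rabs (v - y) < eps / (Rabs K + 1)) x y).
  { exists (mkposreal _ He). simpl. tauto. }
  eapply locally_2d_impl; [|exact (locally_2d_and _ _ _ _ HK Hsmall)].
  apply locally_2d_forall. intros u v [Hd [Hu Hv]].
  rewrite DL_pol_1 in Hd.
  set (M := Rmax (Rabs (u - x)) (Rabs (v - y))) in *.
  assert (HM0 : 0 <= M) by (eapply Rle_trans; [apply Rabs_pos|apply Rmax_l]).
  assert (HM : (Rabs K + 1) * M <= eps).
  { assert (HMe : M < eps / (Rabs K + 1)) by (unfold M; now apply Rmax_case).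
    apply Rmult_lt_compat_l with (r := Rabs K + 1) in HMe; [|pose proof (Rabs_pos K); lra].
    replace ((Rabs K + 1) * (eps / (Rabs K + 1))) with (pos eps) in HMe
      by (field; pose proof (Rabs_pos K); lra).
    lra. }
  replace (f u v - f x y - _) with (f u v - (f x y + (pd1 f x y * (u - x) + pd2 f x y * (v - y))))
    by ring.
  eapply Rle_trans; [exact Hd|]. pose proof (Rle_abs K). simpl. nra.
Qed.

Lemma C2_differentiable (f : R -> R -> R) (x y : R) :
  locally_2d (fun u v => C2_at f u v) x y ->
  differentiable_pt_lim f x y (pd1 f x y) (pd2 f x y).
Proof.
  intros Hf. apply differentiable_of_DL_regular_1, Taylor_Lagrange_2d.
  eapply locally_2d_impl; [|exact Hf].
  apply locally_2d_forall. intros u v. apply C2_at_ex_diff_n.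
Qed.

Section RWGeodesic.

Variables (a t x : R -> R) (s : R).
Hypotheses (a_derivable : ex_derive a (t s)) (a_neq0 : a (t s) <> 0)
  (t_derivable : ex_derive t s) (dt_derivable : ex_derive (Derive t) s)
  (dx_derivable : ex_derive (Derive x) s).
Hypotheses
  (geodesic_t : Derive (Derive t) s + a (t s) * Derive a (t s) * Derive x s ^ 2 = 0)
  (geodesic_x : Derive (Derive x) s
                + 2 * (Derive a (t s) / a (t s)) * Derive t s * Derive x s = 0).

Lemma rw_geodesic_norm_is_derive :
  is_derive (fun r => - Derive t r ^ 2 + a (t r) ^ 2 * Derive x r ^ 2) s 0.
Proof.
  auto_derive; [tauto|].
  change (Derive (fun r => a r)) with (Derive a).
  change (Derive (fun r => t r) s) with (Derive t s).
  change (Derive (fun r => Derive t r) s) with (Derive (Derive t) s).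
  change (Derive (fun r => Derive x r) s) with (Derive (Derive x) s).
  replace (Derive (Derive t) s) with (- (a (t s) * Derive a (t s) * Derive x s ^ 2)) by lra.
  replace (Derive (Derive x) s)
    with (- (2 * (Derive a (t s) / a (t s)) * Derive t s * Derive x s)) by lra.
  field. exact a_neq0.
Qed.

Lemma rw_geodesic_momentum_is_derive :
  is_derive (fun r => a (t r) ^ 2 * Derive x r) s 0.
Proof.
  auto_derive; [tauto|].
  change (Derive (fun r => a r)) with (Derive a).
  change (Derive (fun r => t r) s) with (Derive t s).
  change (Derive (fun r => Derive x r) s) with (Derive (Derive x) s).
  replace (Derive (Derive x) s)
    with (- (2 * (Derive a (t s) / a (t s)) * Derive t s * Derive x s)) by lra.
  field. exact a_neq0.
Qed.

End RWGeodesic.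

Lemma redshift_identity (a_tau a_t Tt Tr Xt Xr v : R) :
  - Tr ^ 2 + a_t ^ 2 * Xr ^ 2 = 1 -> a_t ^ 2 * Xr = a_tau ->
  - Tt * Tr + a_t ^ 2 * Xt * Xr = 0 -> Xt + Xr * v = 0 ->
  - Tt ^ 2 + a_t ^ 2 * Xt ^ 2 <> 0 -> a_tau <> 0 ->
  1 + v ^ 2 / (- Tt ^ 2 + a_t ^ 2 * Xt ^ 2) = a_t ^ 2 / a_tau ^ 2.
Proof.
  intros Hunit Hmom Horth Hvel Hg Ha.
  set (g := - Tt ^ 2 + a_t ^ 2 * Xt ^ 2) in *.
  assert (HXt : Xt = - Xr * v) by lra.
  assert (HTt : Tt * Tr = - a_t ^ 2 * Xr ^ 2 * v) by (rewrite HXt in Horth; lra).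
  assert (Hgram : g * Tr ^ 2 = - a_t ^ 2 * Xr ^ 2 * v ^ 2).
  { transitivity (- (Tt * Tr) ^ 2 + a_t ^ 2 * Xr ^ 2 * v ^ 2 * Tr ^ 2);
      [unfold g; rewrite HXt; ring|].
    rewrite HTt. replace (Tr ^ 2) with (a_t ^ 2 * Xr ^ 2 - 1) by lra. ring. }
  assert (Hkey : (g + v ^ 2) * a_tau ^ 2 = a_t ^ 2 * g).
  { rewrite <- Hmom. replace (Tr ^ 2) with (a_t ^ 2 * Xr ^ 2 - 1) in Hgram by lra. nra. }
  field_simplify_eq; [lra|split; auto using pow_nonzero].
Qed.

Section FermiChart.

Variables (a : R -> R) (chij : R) (D : R -> R -> Prop) (T X : R -> R -> R).
Hypotheses (a_smooth : smooth_pos a) (a_pos : positive_pos a)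
  (chart : FermiChart a chij D T X).

Lemma fermi_slice tau rho c :
  D tau rho -> Rmin 0 rho <= c <= Rmax 0 rho -> D tau c.
Proof. destruct chart as [_ [Hslice _]]. intros HD. exact (Hslice _ _ HD c). Qed.

Lemma fermi_origin tau rho : D tau rho -> D tau 0.
Proof. intros HD. apply (fermi_slice tau rho); auto using Rmin_l, Rmax_l. Qed.

Lemma fermi_time_pos tau rho : D tau rho -> 0 < T tau rho.
Proof. destruct chart as [_ [_ [Hpos _]]]. apply Hpos. Qed.

Lemma fermi_proper_time_pos tau rho : D tau rho -> 0 < tau.
Proof.
  intros HD. pose proof (fermi_origin _ _ HD) as HD0.
  destruct chart as [_ [_ [_ [Hinit _]]]].
  rewrite <- (proj1 (Hinit tau HD0)). exact (fermi_time_pos _ _ HD0).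
Qed.

Lemma fermi_scale_ex_derive tau rho : D tau rho -> ex_derive a (T tau rho).
Proof. intros HD. exact (a_smooth 1%nat _ (fermi_time_pos _ _ HD)). Qed.

Lemma fermi_scale_neq0 tau rho : D tau rho -> a (T tau rho) <> 0.
Proof. intros HD. apply Rgt_not_eq, a_pos, (fermi_time_pos _ _ HD). Qed.

Lemma fermi_slice_norm_is_derive tau c : D tau c ->
  is_derive (fun r => - pd2 T tau r ^ 2 + a (T tau r) ^ 2 * pd2 X tau r ^ 2) c 0.
Proof.
  intros HD. destruct chart as [_ [_ [_ [_ [Hgeo [Hreg _]]]]]].
  destruct (Hreg _ _ HD) as [HT HX].
  pose proof (C2_at_partials _ _ _ HT) as [_ [? [_ [_ [_ ?]]]]].
  pose proof (C2_at_partials _ _ _ HX) as [_ [_ [_ [_ [_ ?]]]]].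
  apply (rw_geodesic_norm_is_derive a (T tau) (X tau) c);
    auto using fermi_scale_ex_derive, fermi_scale_neq0; apply (Hgeo _ _ HD).
Qed.

Lemma fermi_slice_momentum_is_derive tau c : D tau c ->
  is_derive (fun r => a (T tau r) ^ 2 * pd2 X tau r) c 0.
Proof.
  intros HD. destruct chart as [_ [_ [_ [_ [Hgeo [Hreg _]]]]]].
  destruct (Hreg _ _ HD) as [HT HX].
  pose proof (C2_at_partials _ _ _ HT) as [_ [? [_ [_ [_ ?]]]]].
  pose proof (C2_at_partials _ _ _ HX) as [_ [_ [_ [_ [_ ?]]]]].
  apply (rw_geodesic_momentum_is_derive a (T tau) (X tau) c);
    auto using fermi_scale_ex_derive, fermi_scale_neq0; apply (Hgeo _ _ HD).
Qed.

Lemma fermi_slice_norm tau rho : D tau rho ->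
  - pd2 T tau rho ^ 2 + a (T tau rho) ^ 2 * pd2 X tau rho ^ 2 = 1.
Proof.
  intros HD. pose proof (fermi_origin _ _ HD) as HD0.
  destruct chart as [_ [_ [_ [Hinit _]]]].
  destruct (Hinit _ HD0) as [T0 [_ [T0' X0']]].
  rewrite (eq_of_is_derive_0
    (fun r => - pd2 T tau r ^ 2 + a (T tau r) ^ 2 * pd2 X tau r ^ 2) 0 rho).
  - rewrite T0, T0', X0'. field. rewrite <- T0. exact (fermi_scale_neq0 _ _ HD0).
  - intros c Hc. exact (fermi_slice_norm_is_derive _ _ (fermi_slice _ _ _ HD Hc)).
Qed.

Lemma fermi_slice_momentum tau rho : D tau rho ->
  a (T tau rho) ^ 2 * pd2 X tau rho = a tau.
Proof.
  intros HD. pose proof (fermi_origin _ _ HD) as HD0.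
  destruct chart as [_ [_ [_ [Hinit _]]]].
  destruct (Hinit _ HD0) as [T0 [_ [_ X0']]].
  rewrite (eq_of_is_derive_0 (fun r => a (T tau r) ^ 2 * pd2 X tau r) 0 rho).
  - rewrite T0, X0'. field. rewrite <- T0. exact (fermi_scale_neq0 _ _ HD0).
  - intros c Hc. exact (fermi_slice_momentum_is_derive _ _ (fermi_slice _ _ _ HD Hc)).
Qed.

Lemma fermi_near_tau tau rho : D tau rho -> locally tau (fun z => D z rho).
Proof.
  intros HD. destruct chart as [Hopen _].
  exact (locally_2d_1d_const_y D _ _ (Hopen _ _ HD)).
Qed.

Lemma fermi_slice_norm_derive_tau tau rho : D tau rho ->
  - pd2 T tau rho * pd1 (pd2 T) tau rho
  + a (T tau rho) ^ 2 * pd2 X tau rho * pd1 (pd2 X) tau rho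
  + a (T tau rho) * Derive a (T tau rho) * pd1 T tau rho * pd2 X tau rho ^ 2 = 0.
Proof.
  intros HD. destruct chart as [_ [_ [_ [_ [_ [Hreg _]]]]]].
  destruct (Hreg _ _ HD) as [HT HX].
  pose proof (C2_at_partials _ _ _ HT) as [? [_ [_ [_ [? _]]]]].
  pose proof (C2_at_partials _ _ _ HX) as [_ [_ [_ [_ [? _]]]]].
  set (norm := fun z => - pd2 T z rho ^ 2 + a (T z rho) ^ 2 * pd2 X z rho ^ 2).
  assert (Hconst : is_derive norm tau 0).
  { apply is_derive_ext_loc with (f := fun _ => 1); [|apply (is_derive_const 1)].
    eapply filter_imp; [|exact (fermi_near_tau _ _ HD)].
    intros z Hz. symmetry. exact (fermi_slice_norm _ _ Hz). }
  assert (Hcalc : is_derive norm tau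
    (2 * (- pd2 T tau rho * pd1 (pd2 T) tau rho
      + a (T tau rho) ^ 2 * pd2 X tau rho * pd1 (pd2 X) tau rho
      + a (T tau rho) * Derive a (T tau rho) * pd1 T tau rho * pd2 X tau rho ^ 2))).
  { unfold norm. auto_derive.
    - repeat split; auto using fermi_scale_ex_derive.
    - change (Derive (fun r => a r)) with (Derive a).
      change (Derive (fun z => pd2 T z rho) tau) with (pd1 (pd2 T) tau rho).
      change (Derive (fun z => pd2 X z rho) tau) with (pd1 (pd2 X) tau rho).
      change (Derive (fun z => T z rho) tau) with (pd1 T tau rho).
      ring. }
  pose proof (is_derive_unique _ _ _ Hconst) as E0.
  rewrite (is_derive_unique _ _ _ Hcalc) in E0. lra.
Qed.

(* By the geodesic equations the rho-derivative of g(d_tau, d_rho) is g(D_rho d_tau, d_rho);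
   symmetry of second partials turns it into g(D_tau d_rho, d_rho), half the tau-derivative
   of the conserved unit speed. *)
Lemma fermi_orthogonal_is_derive tau c : D tau c ->
  is_derive (fun r => - pd1 T tau r * pd2 T tau r
                      + a (T tau r) ^ 2 * pd1 X tau r * pd2 X tau r) c 0.
Proof.
  intros HD. destruct chart as [_ [_ [_ [_ [Hgeo [Hreg _]]]]]].
  destruct (Hreg _ _ HD) as [HT HX].
  pose proof (C2_at_partials _ _ _ HT) as [_ [? [_ [? [_ ?]]]]].
  pose proof (C2_at_partials _ _ _ HX) as [_ [_ [_ [? [_ ?]]]]].
  destruct (Hgeo _ _ HD) as [geo_t geo_x].
  pose proof (fermi_slice_norm_derive_tau _ _ HD) as Hnorm.
  pose proof (fermi_scale_neq0 _ _ HD) as Ha0.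
  auto_derive.
  - repeat split; auto using fermi_scale_ex_derive.
  - change (Derive (fun r => a r)) with (Derive a).
    change (Derive (fun r => pd1 T tau r) c) with (pd2 (pd1 T) tau c).
    change (Derive (fun r => pd1 X tau r) c) with (pd2 (pd1 X) tau c).
    change (Derive (fun r => pd2 T tau r) c) with (pd2 (pd2 T) tau c).
    change (Derive (fun r => pd2 X tau r) c) with (pd2 (pd2 X) tau c).
    change (Derive (fun r => T tau r) c) with (pd2 T tau c).
    rewrite (C2_at_pd_comm _ _ _ HT), (C2_at_pd_comm _ _ _ HX).
    replace (pd2 (pd2 T) tau c)
      with (- (a (T tau c) * Derive a (T tau c) * pd2 X tau c ^ 2)) by lra.
    replace (pd2 (pd2 X) tau c)
      with (- (2 * (Derive a (T tau c) / a (T tau c)) * pd2 T tau c * pd2 X tau c)) by lra.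
    rewrite <- Hnorm. field. exact Ha0.
Qed.

Lemma fermi_worldline_pd1 tau : D tau 0 -> pd1 X tau 0 = 0.
Proof.
  intros HD. destruct chart as [_ [_ [_ [Hinit _]]]].
  apply is_derive_unique, is_derive_ext_loc with (f := fun _ => chij);
    [|apply (is_derive_const chij)].
  eapply filter_imp; [|exact (fermi_near_tau _ _ HD)].
  intros z Hz. symmetry. exact (proj1 (proj2 (Hinit z Hz))).
Qed.

Lemma fermi_orthogonal tau rho : D tau rho ->
  - pd1 T tau rho * pd2 T tau rho + a (T tau rho) ^ 2 * pd1 X tau rho * pd2 X tau rho = 0.
Proof.
  intros HD. pose proof (fermi_origin _ _ HD) as HD0.
  destruct chart as [_ [_ [_ [Hinit _]]]].
  destruct (Hinit _ HD0) as [_ [_ [T0' _]]].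
  rewrite (eq_of_is_derive_0 (fun r => - pd1 T tau r * pd2 T tau r
                      + a (T tau r) ^ 2 * pd1 X tau r * pd2 X tau r) 0 rho).
  - rewrite T0', (fermi_worldline_pd1 _ HD0). ring.
  - intros c Hc. exact (fermi_orthogonal_is_derive _ _ (fermi_slice _ _ _ HD Hc)).
Qed.

Lemma fermi_velocity_transport chik tau rho v :
  D tau rho -> FermiVel D X chik tau rho v -> pd1 X tau rho + pd2 X tau rho * v = 0.
Proof.
  intros HD [r [Hr [Hpath Hv]]]. destruct chart as [Hopen [_ [_ [_ [_ [Hreg _]]]]]].
  assert (HXdiff : differentiable_pt_lim X tau (r tau) (pd1 X tau rho) (pd2 X tau rho)).
  { rewrite Hr. apply C2_differentiable.
    eapply locally_2d_impl; [|exact (Hopen _ _ HD)].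
    apply locally_2d_forall. intros u w Hu. exact (proj2 (Hreg _ _ Hu)). }
  assert (Hchain : is_derive (fun s => X s (r s)) tau (pd1 X tau rho * 1 + pd2 X tau rho * v)).
  { apply is_derive_Reals, derivable_pt_lim_comp_2d;
      [exact HXdiff|apply derivable_pt_lim_id|apply is_derive_Reals, Hv]. }
  assert (Hconst : is_derive (fun s => X s (r s)) tau 0).
  { apply is_derive_ext_loc with (f := fun _ => chik); [|apply (is_derive_const chik)].
    eapply filter_imp; [|exact Hpath]. intros s [_ Hs]. auto. }
  pose proof (is_derive_unique _ _ _ Hconst). pose proof (is_derive_unique _ _ _ Hchain).
  lra.
Qed.

Lemma fermi_velocity_redshift chik tau rho v :
  D tau rho -> FermiVel D X chik tau rho v ->
  1 + v ^ 2 / gFermi a T X tau rho = a (T tau rho) ^ 2 / a tau ^ 2.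
Proof.
  intros HD Hv. destruct chart as [_ [_ [_ [_ [_ [_ Hneg]]]]]].
  apply redshift_identity with (Tr := pd2 T tau rho) (Xr := pd2 X tau rho).
  - exact (fermi_slice_norm _ _ HD).
  - exact (fermi_slice_momentum _ _ HD).
  - exact (fermi_orthogonal _ _ HD).
  - exact (fermi_velocity_transport _ _ _ _ HD Hv).
  - apply Rlt_not_eq, Hneg, HD.
  - apply Rgt_not_eq, a_pos, (fermi_proper_time_pos _ _ HD).
Qed.

End FermiChart.
Theorem corollary1 (a : R -> R) (chi1 chi2 : R) :
  smooth_pos a -> positive_pos a -> increasing_pos a ->
  (* Scenario I *)
  (forall (tau0 tau1 tm tp : R)
          (D0 : R -> R -> Prop) (T0 X0 : R -> R -> R)
          (D1 : R -> R -> Prop) (T1 X1 : R -> R -> R)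
          (rq rs rs' v1 v2 v3 : R),
     0 < tau0 ->
     FermiChart a 0 D0 T0 X0 -> FermiChart a chi1 D1 T1 X1 ->
     D0 tau0 rq -> T0 tau0 rq = tau1 -> X0 tau0 rq = chi1 ->
     D0 tau0 rs -> T0 tau0 rs = tm -> X0 tau0 rs = chi2 ->
     D1 tau1 rs' -> T1 tau1 rs' = tp -> X1 tau1 rs' = chi2 ->
     FermiVel D0 X0 chi1 tau0 rq v1 ->
     FermiVel D1 X1 chi2 tau1 rs' v2 ->
     FermiVel D0 X0 chi2 tau0 rs v3 ->
     1 + v3 ^ 2 / gFermi a T0 X0 tau0 rs =
       (a tm) ^ 2 / (a tp) ^ 2
       * (1 + v1 ^ 2 / gFermi a T0 X0 tau0 rq)
       * (1 + v2 ^ 2 / gFermi a T1 X1 tau1 rs')) /\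
  (* Scenario II *)
  (forall (tm tp tau1 tau2 : R)
          (D0 : R -> R -> Prop) (T0 X0 : R -> R -> R)
          (D1 : R -> R -> Prop) (T1 X1 : R -> R -> R)
          (rq rs rs0 v1 v2 v3 : R),
     0 < tm -> 0 < tp ->
     FermiChart a 0 D0 T0 X0 -> FermiChart a chi1 D1 T1 X1 ->
     D0 tm rq -> T0 tm rq = tau1 -> X0 tm rq = chi1 ->
     D1 tau1 rs -> T1 tau1 rs = tau2 -> X1 tau1 rs = chi2 ->
     D0 tp rs0 -> T0 tp rs0 = tau2 -> X0 tp rs0 = chi2 ->
     FermiVel D0 X0 chi1 tm rq v1 ->
     FermiVel D1 X1 chi2 tau1 rs v2 ->
     FermiVel D0 X0 chi2 tp rs0 v3 ->
     1 + v3 ^ 2 / gFermi a T0 X0 tp rs0 =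
       (a tm) ^ 2 / (a tp) ^ 2
       * (1 + v1 ^ 2 / gFermi a T0 X0 tm rq)
       * (1 + v2 ^ 2 / gFermi a T1 X1 tau1 rs)) /\
  (* Scenario III *)
  (forall (tau0 tm tp tau2 : R)
          (D0 : R -> R -> Prop) (T0 X0 : R -> R -> R)
          (D1 : R -> R -> Prop) (T1 X1 : R -> R -> R)
          (rq rs rs1 v1 v2 v3 : R),
     0 < tau0 -> 0 < tm ->
     FermiChart a 0 D0 T0 X0 -> FermiChart a chi1 D1 T1 X1 ->
     D0 tau0 rq -> T0 tau0 rq = tp -> X0 tau0 rq = chi1 ->
     D0 tau0 rs -> T0 tau0 rs = tau2 -> X0 tau0 rs = chi2 ->
     D1 tm rs1 -> T1 tm rs1 = tau2 -> X1 tm rs1 = chi2 ->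
     FermiVel D0 X0 chi1 tau0 rq v1 ->
     FermiVel D1 X1 chi2 tm rs1 v2 ->
     FermiVel D0 X0 chi2 tau0 rs v3 ->
     1 + v3 ^ 2 / gFermi a T0 X0 tau0 rs =
       (a tm) ^ 2 / (a tp) ^ 2
       * (1 + v1 ^ 2 / gFermi a T0 X0 tau0 rq)
       * (1 + v2 ^ 2 / gFermi a T1 X1 tm rs1)).
Proof.
  intros Hs Hp _.
  pose proof (fun chij D T X HF => fermi_velocity_redshift a chij D T X Hs Hp HF) as redshift.
  split; [|split].
  - intros tau0 tau1 tm tp D0 T0 X0 D1 T1 X1 rq rs rs' v1 v2 v3 _ HF0 HF1
      Dq Tq _ Ds Ts _ Ds' Ts' _ V1 V2 V3.
    rewrite (redshift _ _ _ _ HF0 _ _ _ _ Dq V1), (redshift _ _ _ _ HF1 _ _ _ _ Ds' V2),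
      (redshift _ _ _ _ HF0 _ _ _ _ Ds V3), Tq, Ts, Ts'.
    pose proof (Hp _ (fermi_proper_time_pos _ _ _ _ _ HF0 _ _ Dq)).
    pose proof (Hp _ (fermi_proper_time_pos _ _ _ _ _ HF1 _ _ Ds')).
    pose proof (Hp _ (fermi_time_pos _ _ _ _ _ HF1 _ _ Ds')). rewrite Ts' in *.
    field. repeat split; lra.
  - intros tm tp tau1 tau2 D0 T0 X0 D1 T1 X1 rq rs rs0 v1 v2 v3 Hm Hpp HF0 HF1
      Dq Tq _ Ds Ts _ Ds0 Ts0 _ V1 V2 V3.
    rewrite (redshift _ _ _ _ HF0 _ _ _ _ Dq V1), (redshift _ _ _ _ HF1 _ _ _ _ Ds V2),
      (redshift _ _ _ _ HF0 _ _ _ _ Ds0 V3), Tq, Ts, Ts0.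
    pose proof (Hp _ Hm). pose proof (Hp _ Hpp).
    pose proof (Hp _ (fermi_proper_time_pos _ _ _ _ _ HF1 _ _ Ds)).
    field. repeat split; lra.
  - intros tau0 tm tp tau2 D0 T0 X0 D1 T1 X1 rq rs rs1 v1 v2 v3 H0 Hm HF0 HF1
      Dq Tq _ Ds Ts _ Ds1 Ts1 _ V1 V2 V3.
    rewrite (redshift _ _ _ _ HF0 _ _ _ _ Dq V1), (redshift _ _ _ _ HF1 _ _ _ _ Ds1 V2),
      (redshift _ _ _ _ HF0 _ _ _ _ Ds V3), Tq, Ts, Ts1.
    pose proof (Hp _ H0). pose proof (Hp _ Hm).
    pose proof (Hp _ (fermi_time_pos _ _ _ _ _ HF0 _ _ Dq)). rewrite Tq in *.
    field. repeat split; lra.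
Qed.
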